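(* Let $1\le\tau_1<\dots<\tau_m$ be thresholds and $P,Q$ two candidates. If $P$ beats $Q$ under Weighted Majority Rule 4, then $SC(P)\le\tau_m\,SC(Q)+2\,SC(Z)$ for every point $Z$ of the metric space.
   Context: Voters $N$ and candidates are points of an arbitrary metric space $(X,d)$; $SC(Y)=\sum_{i\in N}d(i,Y)$ for $Y\in X$. Set $\tau_0=1/\tau_1$, $\tau_{m+1}=\infty$, $\delta=\max_{0\le l\le m}\frac{\tau_l\tau_{l+1}+2\tau_{l+1}-1}{\tau_l\tau_{l+1}+1}$ (the $l=m$ term meaning $(\tau_m+2)/\tau_m$), and $k\in\{1,\dots,m\}$ with $\tau_k\le\delta<\tau_{k+1}$; $\frac{\tau_{m+1}-\delta}{\tau_{m+1}-1}:=1$. Preference strength of $i$ for $P$ over $Q$ is $\alpha_i^{PQ}=d(i,Q)/d(i,P)$ when $d(i,P)\le d(i,Q)$. $A_l=\{i: d(i,P)\le d(i,Q),\ \tau_l\le\alpha_i^{PQ}<\tau_{l+1}\}$, $B_l=\{j: d(j,Q)\le d(j,P),\ \tau_l\le\alpha_j^{QP}<\tau_{l+1}\}$, $C$ the remaining voters. Weighted Majority Rule 4: for $l<k$ voters in $A_l\cup B_l$ get weight $\frac{(\delta+1)(\tau_l\tau_{l+1}-1)}{(\tau_l+1)(\tau_{l+1}+1)}$; for $l\ge k$ they get weight $\frac{\tau_{l+1}-\delta}{\tau_{l+1}-1}+\frac{\delta\tau_l-1}{\tau_l+1}$; voters in $C$ get weight $0$; $P$ beats $Q$ iff the total weight of $\bigcup_lA_l$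 is at least that of $\bigcup_lB_l$. *)

From Stdlib Require Import Reals Lra Lia List Arith.
Import ListNotations.
Open Scope R_scope.

Definition rsum {A : Type} (f : A -> R) (s : list A) : R :=
  fold_right (fun x acc => f x + acc) 0 s.

Definition rleb (x y : R) : bool := if Rle_dec x y then true else false.
Definition rltb (x y : R) : bool := if Rlt_dec x y then true else false.

Definition SC {X : Type} (d : X -> X -> R) (voters : list X) (Y : X) : R :=
  rsum (fun i => d i Y) voters.

(* thresholds tau_1..tau_m are tau 1 .. tau m; tau_0 := 1/tau_1.
   (tau_{m+1} = infinity is handled explicitly below.) *)
Definition tau_ext (tau : nat -> R) (l : nat) : R :=
  if Nat.eqb l 0 then / tau 1%nat else tau l.

Definition dterm (tau : nat -> R) (m l : nat) : R :=
  if Nat.eqb l m then (tau m + 2) / tau m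
  else (tau_ext tau l * tau (S l) + 2 * tau (S l) - 1)
       / (tau_ext tau l * tau (S l) + 1).

Definition delta (tau : nat -> R) (m : nat) : R :=
  fold_right Rmax (dterm tau m 0) (map (dterm tau m) (seq 0 (S m))).

(* i in A_l : d(i,P) <= d(i,Q) and tau_l <= alpha_i^{PQ} < tau_{l+1},
   with alpha = d(i,Q)/d(i,P) read multiplicatively (alpha = +infinity when
   d(i,P)=0), and tau_{m+1} = +infinity. *)
Definition inAb {X : Type} (d : X -> X -> R) (tau : nat -> R) (m : nat)
  (P Q : X) (l : nat) (i : X) : bool :=
  rleb (d i P) (d i Q) && rleb (tau_ext tau l * d i P) (d i Q) &&
  (if Nat.ltb l m then rltb (d i Q) (tau (S l) * d i P) else true).

(* weight of voters in A_l u B_l under Weighted Majority Rule 4 *)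
Definition wmr4_weight (tau : nat -> R) (m k : nat) (l : nat) : R :=
  let dl := delta tau m in
  let a := tau_ext tau l in
  let b := tau (S l) in
  if Nat.ltb l k then (dl + 1) * (a * b - 1) / ((a + 1) * (b + 1))
  else (if Nat.eqb l m then 1 else (b - dl) / (b - 1)) + (dl * a - 1) / (a + 1).

(* total weight of the union of the A_l (the A_l are pairwise disjoint);
   voters in C (in no A_l) contribute 0. *)
Definition weightA {X : Type} (d : X -> X -> R) (voters : list X)
  (tau : nat -> R) (m k : nat) (P Q : X) : R :=
  rsum (fun i => rsum (fun l => if inAb d tau m P Q l i then wmr4_weight tau m k l else 0)
                      (seq 0 (S m))) voters.

(* P beats Q under WMR4: weight(U A_l) >= weight(U B_l), where B_l is A_l with P,Q swapped *)
Definition beats_WMR4 {X : Type} (d : X -> X -> R) (voters : list X)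
  (tau : nat -> R) (m k : nat) (P Q : X) : Prop :=
  weightA d voters tau m k Q P <= weightA d voters tau m k P Q.

From Stdlib Require Import Reals List Lra Lia.
Open Scope R_scope.

(* Write W for the weight of the top class A_m (= B_m) and
   e = max(0, d(Z,P) - d(Z,Q)).  The proof has three ingredients.
   1. Weights: every class weight lies in [0, W] (arithmetic on the
      formulas of the rule, using tau_k <= delta < tau_(k+1)).
   2. Classes: the classes A_0, ..., A_m are pairwise disjoint, and a voter
      with d(i,Q) >= tau_m d(i,P) lies in A_m.  Hence a voter's weight for P
      lies in [0, W], is 0 if the voter strictly prefers Q, and is at least W
      if the voter prefers P by a factor tau_m (symmetrically for Q).
   3. A per-voter trade-off, from the triangle inequality through Z:
        W (d(i,P) - tau_m d(i,Q) - 2 d(i,Z)) <= e (weight_i(Q) - weight_i(P)).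
   Summing over voters and using weight(P) >= weight(Q) gives
   W (SC(P) - tau_m SC(Q) - 2 SC(Z)) <= 0, and W > 0 concludes. *)

Lemma rleb_true x y : rleb x y = true <-> x <= y.
Proof. unfold rleb; destruct (Rle_dec x y); split; intros; auto; discriminate. Qed.

Lemma rltb_true x y : rltb x y = true <-> x < y.
Proof. unfold rltb; destruct (Rlt_dec x y); split; intros; auto; discriminate. Qed.

Lemma frac_le p q p' q' : 0 < q -> 0 < q' -> p * q' <= p' * q -> p / q <= p' / q'.
Proof.
  intros Hq Hq' H.
  apply Rmult_le_reg_r with (q * q'); [nra|].
  replace (p / q * (q * q')) with (p * q') by (field; lra).
  replace (p' / q' * (q * q')) with (p' * q) by (field; lra).
  exact H.
Qed.

Lemma frac_nonneg p q : 0 <= p -> 0 < q -> 0 <= p / q.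
Proof. intros; apply Rmult_le_pos; [|apply Rlt_le, Rinv_0_lt_compat]; lra. Qed.

Section ListSums.
Variable A : Type.

Lemma rsum_plus (f g : A -> R) s : rsum (fun x => f x + g x) s = rsum f s + rsum g s.
Proof. induction s as [|x s IH]; simpl; [ring | rewrite IH; ring]. Qed.

Lemma rsum_scal c (f : A -> R) s : rsum (fun x => c * f x) s = c * rsum f s.
Proof. induction s as [|x s IH]; simpl; [ring | rewrite IH; ring]. Qed.

Lemma rsum_le (f g : A -> R) s : (forall x, f x <= g x) -> rsum f s <= rsum g s.
Proof.
  intros H; induction s as [|x s IH]; simpl; [lra|].
  specialize (H x); lra.
Qed.

Definition selsum (p : A -> bool) (w : A -> R) (s : list A) : R :=
  rsum (fun l => if p l then w l else 0) s.

Variables (p : A -> bool) (w : A -> R).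

Lemma selsum_none s : (forall l, In l s -> p l = false) -> selsum p w s = 0.
Proof.
  unfold selsum; induction s as [|h t IH]; intros H; simpl; auto.
  rewrite H, IH; [ring | intros; apply H | ]; simpl; auto.
Qed.

Lemma selsum_nonneg s : (forall l, In l s -> 0 <= w l) -> 0 <= selsum p w s.
Proof.
  unfold selsum; induction s as [|h t IH]; intros Hw; simpl; [lra|].
  pose proof (Hw h (or_introl eq_refl)).
  assert (0 <= rsum (fun l => if p l then w l else 0) t) by (apply IH; simpl in Hw; auto).
  destruct (p h); lra.
Qed.

Lemma selsum_ge_selected s l0 : (forall l, In l s -> 0 <= w l) ->
  In l0 s -> p l0 = true -> w l0 <= selsum p w s.
Proof.
  induction s as [|h t IH]; intros Hw Hin Hp; [destruct Hin|].
  assert (Hwt : forall l, In l t -> 0 <= w l) by (simpl in Hw; auto).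
  pose proof (selsum_nonneg t Hwt); pose proof (Hw h (or_introl eq_refl)).
  unfold selsum in *; simpl.
  destruct Hin as [<-|Hin].
  - rewrite Hp; lra.
  - specialize (IH Hwt Hin Hp); destruct (p h); lra.
Qed.

Lemma selsum_le_single s W : NoDup s -> 0 <= W ->
  (forall l1 l2, In l1 s -> In l2 s -> p l1 = true -> p l2 = true -> l1 = l2) ->
  (forall l, In l s -> w l <= W) -> selsum p w s <= W.
Proof.
  induction s as [|h t IH]; intros Hnd HW Hu Hw; unfold selsum; simpl; [lra|].
  inversion Hnd as [|? ? Hh Ht]; subst.
  destruct (p h) eqn:Eh.
  - change (w h + selsum p w t <= W); rewrite (selsum_none t).
    + specialize (Hw h (or_introl eq_refl)); lra.
    + intros l Hl; destruct (p l) eqn:El; auto.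
      assert (l = h) by (apply Hu; simpl; auto); subst; contradiction.
  - rewrite Rplus_0_l; fold (selsum p w t).
    apply IH; auto; intros; [apply Hu | apply Hw]; simpl; auto.
Qed.
End ListSums.

Arguments selsum {A} p w s.

Lemma tau_mono (tau : nat -> R) m :
  (forall l, (1 <= l)%nat -> (l < m)%nat -> tau l < tau (S l)) ->
  forall i j, (1 <= i)%nat -> (i <= j)%nat -> (j <= m)%nat -> tau i <= tau j.
Proof.
  intros Hinc i j Hi Hij Hjm; induction Hij as [|j Hij IH]; [lra|].
  specialize (Hinc j ltac:(lia) ltac:(lia)); specialize (IH ltac:(lia)); lra.
Qed.

(* The weight formula of the classes l < k (a = tau_l, b = tau_(l+1)) lies in
   [0, 1 + (delta t - 1)/(t + 1)], the top weight when t = tau_m >= b. *)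
Lemma low_weight_bound dl a b t : 1 <= dl -> 0 < a -> 1 <= b -> 1 <= a * b -> b <= t ->
  0 <= (dl + 1) * (a * b - 1) / ((a + 1) * (b + 1)) <= 1 + (dl * t - 1) / (t + 1).
Proof.
  intros. split; [apply frac_nonneg; nra|].
  replace (1 + (dl * t - 1) / (t + 1)) with ((dl + 1) * t / (t + 1)) by (field; lra).
  assert (Hcross : (a * b - 1) * (t + 1) <= t * ((a + 1) * (b + 1))) by nra.
  apply frac_le; [nra | lra |].
  replace ((dl + 1) * (a * b - 1) * (t + 1)) with ((dl + 1) * ((a * b - 1) * (t + 1))) by ring.
  replace ((dl + 1) * t * ((a + 1) * (b + 1))) with ((dl + 1) * (t * ((a + 1) * (b + 1)))) by ring.
  apply Rmult_le_compat_l; lra.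
Qed.

Lemma high_weight_bound dl a b t : 1 <= dl -> 1 <= a -> dl < b -> a <= t ->
  0 <= (b - dl) / (b - 1) + (dl * a - 1) / (a + 1) <= 1 + (dl * t - 1) / (t + 1).
Proof.
  intros.
  assert (0 <= (b - dl) / (b - 1) <= 1 / 1) by (split; [apply frac_nonneg | apply frac_le]; lra).
  assert (0 <= (dl * a - 1) / (a + 1) <= (dl * t - 1) / (t + 1))
    by (split; [apply frac_nonneg | apply frac_le]; nra).
  replace (1 / 1) with 1 in * by field; lra.
Qed.

(* Here x, y, z are the voter's distances to P, Q, Z,
   c = d(Z,P) - d(Z,Q) is pinned down by the triangle inequality, and a, b are
   the voter's weights for P and for Q.  A voter preferring P (weight a <= W)
   is paid for by x - t y - 2 z <= -max(0, c); a voter preferring Q by a factor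
   t carries weight b >= W and satisfies x - t y - 2 z <= max(0, c). *)
Lemma voter_tradeoff x y z c t W a b :
  0 <= y -> 0 <= z -> 1 <= t -> 0 <= W ->
  x - y - 2 * z <= c -> c <= x - y + 2 * z ->
  (x < y -> b = 0 /\ 0 <= a <= W) ->
  (x = y -> a = b) ->
  (y < x -> a = 0 /\ 0 <= b /\ (t * y <= x -> W <= b)) ->
  W * x + Rmax 0 c * a <= (W * t) * y + (2 * W) * z + Rmax 0 c * b.
Proof.
  intros Hy Hz Ht HW Hc_lo Hc_hi Hpref_P Htie Hpref_Q.
  set (e := Rmax 0 c).
  assert (He0 : 0 <= e) by apply Rmax_l.
  assert (Hce : c <= e) by apply Rmax_r.
  assert (He : e = 0 \/ e = c) by (unfold e, Rmax; destruct (Rle_dec 0 c); auto).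
  assert (Hty : y <= t * y) by nra.
  destruct (Rtotal_order x y) as [Hlt | [Heq | Hgt]].
  - destruct (Hpref_P Hlt) as [-> Ha].
    assert (Hgain : x - t * y - 2 * z + e <= 0) by (destruct He; lra).
    assert (e * a <= e * W) by (apply Rmult_le_compat_l; lra).
    nra.
  - rewrite (Htie Heq); nra.
  - destruct (Hpref_Q Hgt) as [-> [Hb Hb_top]].
    destruct (Rle_lt_dec x (t * y)) as [Hx | Hx].
    + assert (0 <= e * b) by nra. nra.
    + specialize (Hb_top (Rlt_le _ _ Hx)).
      assert (W * e <= b * e) by (apply Rmult_le_compat_r; lra).
      nra.
Qed.

Section Rule4.
Variables (tau : nat -> R) (m k : nat).
Hypothesis Hm : (1 <= m)%nat.
Hypothesis Htau1 : 1 <= tau 1%nat.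
Hypothesis Hmono : forall i j, (1 <= i)%nat -> (i <= j)%nat -> (j <= m)%nat -> tau i <= tau j.
Hypothesis Hk1 : (1 <= k)%nat.
Hypothesis Hkm : (k <= m)%nat.
Hypothesis Hk_lo : tau k <= delta tau m.
Hypothesis Hk_hi : (k < m)%nat -> delta tau m < tau (S k).

Lemma tau_ge_1 l : (1 <= l)%nat -> (l <= m)%nat -> 1 <= tau l.
Proof. intros; pose proof (Hmono 1 l ltac:(lia) ltac:(lia) ltac:(lia)); lra. Qed.

Lemma delta_ge_1 : 1 <= delta tau m.
Proof. pose proof (tau_ge_1 k Hk1 Hkm); lra. Qed.

Lemma tau_ext_pos l : (1 <= l)%nat -> (l <= m)%nat -> tau_ext tau l = tau l.
Proof.
  intros; unfold tau_ext.
  replace (Nat.eqb l 0) with false by (symmetry; apply Nat.eqb_neq; lia); reflexivity.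
Qed.

Lemma top_weight_eq :
  wmr4_weight tau m k m = 1 + (delta tau m * tau m - 1) / (tau m + 1).
Proof.
  unfold wmr4_weight; rewrite tau_ext_pos, Nat.eqb_refl by lia.
  replace (Nat.ltb m k) with false by (symmetry; apply Nat.ltb_ge; lia); auto.
Qed.

Lemma top_weight_pos : 0 < wmr4_weight tau m k m.
Proof.
  rewrite top_weight_eq.
  pose proof delta_ge_1; pose proof (tau_ge_1 m ltac:(lia) ltac:(lia)).
  assert (0 <= (delta tau m * tau m - 1) / (tau m + 1)) by (apply frac_nonneg; nra).
  lra.
Qed.

Lemma weight_bounds l : (l <= m)%nat ->
  0 <= wmr4_weight tau m k l <= wmr4_weight tau m k m.
Proof.
  intros Hl; rewrite top_weight_eq; pose proof delta_ge_1.
  unfold wmr4_weight; destruct (Nat.ltb l k) eqn:Elk.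
  -
    apply Nat.ltb_lt in Elk.
    pose proof (tau_ge_1 (S l) ltac:(lia) ltac:(lia)).
    pose proof (Hmono (S l) m ltac:(lia) ltac:(lia) ltac:(lia)).
    destruct l as [|l].
    + unfold tau_ext; simpl.
      apply low_weight_bound; try lra; [apply Rinv_0_lt_compat; lra|].
      rewrite Rinv_l by lra; lra.
    + rewrite tau_ext_pos by lia.
      pose proof (tau_ge_1 (S l) ltac:(lia) ltac:(lia)).
      apply low_weight_bound; nra.
  -
    apply Nat.ltb_ge in Elk.
    rewrite tau_ext_pos by lia.
    pose proof (tau_ge_1 l ltac:(lia) ltac:(lia)).
    pose proof (Hmono l m ltac:(lia) ltac:(lia) ltac:(lia)).
    destruct (Nat.eqb l m) eqn:Elm.
    + apply Nat.eqb_eq in Elm; subst l.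
      assert (0 <= (delta tau m * tau m - 1) / (tau m + 1)) by (apply frac_nonneg; nra).
      lra.
    + apply Nat.eqb_neq in Elm.
      pose proof (Hk_hi ltac:(lia)).
      pose proof (Hmono (S k) (S l) ltac:(lia) ltac:(lia) ltac:(lia)).
      apply high_weight_bound; lra.
Qed.

(* A voter's class weight for P against Q (0 if the voter lies in no class A_l);
   [weightA] is by definition the sum of [voter_weight] over the voters. *)
Definition voter_weight {X : Type} (d : X -> X -> R) (P Q : X) (i : X) : R :=
  selsum (fun l => inAb d tau m P Q l i) (wmr4_weight tau m k) (seq 0 (S m)).

Variables (X : Type) (d : X -> X -> R).
Hypothesis d_nonneg : forall x y, 0 <= d x y.

Lemma inAb_prefers P Q l i : inAb d tau m P Q l i = true -> d i P <= d i Q.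
Proof. unfold inAb; intros H; do 2 apply andb_prop in H as [H _]; apply rleb_true, H. Qed.

Lemma inAb_disjoint P Q i l1 l2 : (l1 < l2)%nat -> (l2 <= m)%nat ->
  inAb d tau m P Q l1 i = true -> inAb d tau m P Q l2 i = true -> False.
Proof.
  unfold inAb; intros Hlt Hl2 H1 H2.
  apply andb_prop in H1 as [_ H1]; apply andb_prop in H2 as [H2 _].
  apply andb_prop in H2 as [_ H2]; apply rleb_true in H2.
  replace (Nat.ltb l1 m) with true in H1 by (symmetry; apply Nat.ltb_lt; lia).
  apply rltb_true in H1; rewrite tau_ext_pos in H2 by lia.
  pose proof (Hmono (S l1) l2 ltac:(lia) ltac:(lia) ltac:(lia)).
  pose proof (d_nonneg i P).
  assert (tau (S l1) * d i P <= tau l2 * d i P) by (apply Rmult_le_compat_r; lra).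
  lra.
Qed.

Lemma inAb_top P Q i : d i P <= d i Q -> tau m * d i P <= d i Q ->
  inAb d tau m P Q m i = true.
Proof.
  intros H1 H2; unfold inAb; rewrite Nat.ltb_irrefl, tau_ext_pos by lia.
  apply rleb_true in H1; apply rleb_true in H2; rewrite H1, H2; reflexivity.
Qed.

Lemma voter_weight_nonpref P Q i : d i Q < d i P -> voter_weight d P Q i = 0.
Proof.
  intros H; apply selsum_none; intros l _.
  destruct (inAb d tau m P Q l i) eqn:E; auto.
  apply inAb_prefers in E; lra.
Qed.

Lemma voter_weight_bounds P Q i :
  0 <= voter_weight d P Q i <= wmr4_weight tau m k m.
Proof.
  assert (Hw : forall l, In l (seq 0 (S m)) -> 0 <= wmr4_weight tau m k l <= wmr4_weight tau m k m)
    by (intros l Hl; apply in_seq in Hl; apply weight_bounds; lia).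
  unfold voter_weight; split.
  - apply selsum_nonneg; apply Hw.
  - apply selsum_le_single; [apply seq_NoDup | apply Rlt_le, top_weight_pos | | apply Hw].
    intros l1 l2 G1 G2 H1 H2; apply in_seq in G1; apply in_seq in G2.
    destruct (Nat.lt_total l1 l2) as [Hlt | [Heq | Hgt]]; auto; exfalso.
    + apply (inAb_disjoint P Q i l1 l2); auto; lia.
    + apply (inAb_disjoint P Q i l2 l1); auto; lia.
Qed.

Lemma voter_weight_top P Q i : d i P <= d i Q -> tau m * d i P <= d i Q ->
  wmr4_weight tau m k m <= voter_weight d P Q i.
Proof.
  intros H1 H2; unfold voter_weight.
  apply selsum_ge_selected; [| apply in_seq; lia | apply inAb_top; auto].
  intros l Hl; apply in_seq in Hl; apply weight_bounds; lia.
Qed.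

Lemma voter_weight_tie P Q i : d i P = d i Q -> voter_weight d P Q i = voter_weight d Q P i.
Proof. intros H; unfold voter_weight, inAb; rewrite H; reflexivity. Qed.

Hypothesis d_sym : forall x y, d x y = d y x.
Hypothesis d_tri : forall x y z, d x z <= d x y + d y z.

Lemma voter_bound P Q Z i :
  let W := wmr4_weight tau m k m in
  let e := Rmax 0 (d Z P - d Z Q) in
  W * d i P + e * voter_weight d P Q i
    <= (W * tau m) * d i Q + (2 * W) * d i Z + e * voter_weight d Q P i.
Proof.
  intros W e; unfold W, e.
  pose proof (d_nonneg i Q); pose proof (d_nonneg i Z).
  pose proof top_weight_pos; pose proof (tau_ge_1 m ltac:(lia) ltac:(lia)).
  pose proof (d_tri i Z P); pose proof (d_tri Z i Q); pose proof (d_tri Z i P); pose proof (d_tri i Z Q).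
  rewrite (d_sym Z i) in *.
  pose proof (voter_weight_bounds P Q i); pose proof (voter_weight_bounds Q P i).
  apply voter_tradeoff; [lra ..| | |].
  - intros Hpref; split; [apply voter_weight_nonpref; lra | lra].
  - apply voter_weight_tie.
  - intros Hpref; split; [apply voter_weight_nonpref; lra | split; [lra |]].
    intros Htop; apply voter_weight_top; lra.
Qed.
End Rule4.

Theorem mainTheorem18 (X : Type) (d : X -> X -> R)
  (d_nonneg : forall x y, 0 <= d x y)
  (d_zero : forall x y, d x y = 0 <-> x = y)
  (d_sym : forall x y, d x y = d y x)
  (d_tri : forall x y z, d x z <= d x y + d y z)
  (voters : list X) (m : nat) (tau : nat -> R)
  (Hm : (1 <= m)%nat)
  (Htau1 : 1 <= tau 1%nat)
  (Htau_inc : forall l, (1 <= l)%nat -> (l < m)%nat -> tau l < tau (S l))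
  (k : nat) (Hk1 : (1 <= k)%nat) (Hkm : (k <= m)%nat)
  (Hk_lo : tau k <= delta tau m)
  (Hk_hi : (k < m)%nat -> delta tau m < tau (S k))
  (P Q : X)
  (Hbeats : beats_WMR4 d voters tau m k P Q) :
  forall Z : X, SC d voters P <= tau m * SC d voters Q + 2 * SC d voters Z.
Proof.
  intros Z.
  pose proof (tau_mono tau m Htau_inc) as Hmono.
  set (W := wmr4_weight tau m k m).
  set (e := Rmax 0 (d Z P - d Z Q)).
  assert (HW : 0 < W) by (apply (top_weight_pos tau m k); auto).
  assert (He : 0 <= e) by apply Rmax_l.
  assert (Hsum : W * SC d voters P + e * weightA d voters tau m k P Q
                 <= (W * tau m) * SC d voters Q + (2 * W) * SC d voters Z
                    + e * weightA d voters tau m k Q P).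
  { pose proof (rsum_le _ _ _ voters
      (voter_bound tau m k Hm Htau1 Hmono Hk1 Hkm Hk_lo Hk_hi X d d_nonneg d_sym d_tri P Q Z))
      as Hs.
    rewrite !rsum_plus, !rsum_scal in Hs; exact Hs. }
  unfold beats_WMR4 in Hbeats.
  assert (e * weightA d voters tau m k Q P <= e * weightA d voters tau m k P Q)
    by (apply Rmult_le_compat_l; assumption).
  apply Rmult_le_reg_l with W; [exact HW | lra].
Qed.
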